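(* Let $T$ be a c.n.u. contraction on $H$, let $(H_+,H_-,\Gamma_+,\Gamma_-)$ be a boundary quadruple for $A_T^{\perp_s}$ with contractive Weyl function $B$ and $\gamma$-fields $\gamma_\pm$, and let $\varphi_+=pr_1\circ\gamma_+$, $\varphi_-=pr_2\circ\gamma_-$. Then: (1) for $\lambda,\mu\in\mathbb{D}_+$ and $x,y\in H_+$: $(\varphi_+(\lambda)x,\varphi_+(\mu)y)_H=\frac{1}{1-\lambda\bar\mu}((I-B(\mu)^*B(\lambda))x,y)_{H_+}$; (2) for $\lambda,\mu\in\mathbb{D}_-$ and $x,y\in H_-$: $(\varphi_-(\lambda)x,\varphi_-(\mu)y)_H=\frac{1}{1-\lambda\bar\mu}((I-B(\bar\mu)B(\bar\lambda)^* )x,y)_{H_-}$; (3) for $\lambda\in\mathbb{D}_+$, $\mu\in\mathbb{D}_-$, $x\in H_+$, $y\in H_-$: $(\varphi_+(\lambda)x,\varphi_-(\mu)y)_H=\frac{1}{\lambda-\bar\mu}((B(\lambda)-B(\bar\mu))x,y)_{H_-}$, where for $\lambda=\bar\mu$ the right-hand side is understood as its limit.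
   Context: $H$ is an infinite-dimensional separable complex Hilbert space; $T\in\mathbb{B}(H)$, $\|T\|\le1$, is completely non-unitary. $\mathbb{K}=\ker(I-T^*T)$. $\mathbb{H}=H\oplus_\perp H$ with $[(x_1,x_2),(y_1,y_2)]=i(x_1,y_1)_H-i(x_2,y_2)_H$; $S^{\perp_s}=\{a:[a,b]=0\ \forall b\in S\}$; $A_T=\{(x,Tx):x\in\mathbb{K}\}$. $\mathbb{D}_\pm$ are two copies of the open unit disc (coordinates $\lambda$ with $|\lambda|<1$); for $\lambda\in\mathbb{D}_\pm$, $\bar\lambda$ denotes the complex conjugate coordinate, regarded as a point of $\mathbb{D}_\mp$ where appropriate. $N_\lambda=\{(x,\lambda x):x\in H\}\cap A_T^{\perp_s}$ for $\lambda\in\mathbb{D}_+$, $N_\lambda=\{(\lambda x,x):x\in H\}\cap A_T^{\perp_s}$ for $\lambda\in\mathbb{D}_-$. A boundary quadruple for $A_T^{\perp_s}$ is $(H_+,H_-,\Gamma_+,\Gamma_-)$, $H_\pm$ Hilbert spaces, $\Gamma_\pm:A_T^{\perp_s}\to H_\pm$ linear, with $(\Gamma_+,\Gamma_-)$ bounded, surjective onto $H_+\oplus_\perp H_-$, kernel $A_T$, and $[a,b]=i(\Gamma_+a,\Gamma_+b)_{H_+}-i(\Gamma_-a,\Gamma_-b)_{H_-}$. For such a quadruple: for $\lambda\in\mathbb{D}_+$, $\Gamma_+|_{N_\lambda}$ is a bijection onto $H_+$ and there is a unique $B(\lambda)\in\mathbb{B}(H_+,H_-)$ with $\Gamma_-a=B(\lambda)\Gamma_+a$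 for $a\in N_\lambda$; for $\lambda\in\mathbb{D}_-$, $\Gamma_-|_{N_\lambda}$ is a bijection onto $H_-$ and $\Gamma_+a=B(\bar\lambda)^*\Gamma_-a$ for $a\in N_\lambda$. $B$ is holomorphic on $\mathbb{D}_+$ with $\|B(\lambda)\|<1$ (the contractive Weyl function). The $\gamma$-fields are $\gamma_+(\lambda)x\in N_\lambda$ with $\Gamma_+\gamma_+(\lambda)x=x$ ($\lambda\in\mathbb{D}_+$, $x\in H_+$) and $\gamma_-(\lambda)x\in N_\lambda$ with $\Gamma_-\gamma_-(\lambda)x=x$ ($\lambda\in\mathbb{D}_-$, $x\in H_-$). $pr_1,pr_2$ are the projections of $\mathbb{H}$ onto its first and second copy of $H$. *)

From HB Require Import structures.
From mathcomp Require Import all_boot all_order all_algebra.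
From mathcomp Require Import complex.
From mathcomp Require Import all_classical all_reals topology normedtype.
Import Order.TTheory GRing.Theory Num.Theory.
Import numFieldNormedType.Exports.

Set Implicit Arguments.
Unset Strict Implicit.
Unset Printing Implicit Defensive.

Local Open Scope ring_scope.

(* The complex numbers R[i] (R a real field) carry their usual metric topology,
   induced by the modulus (the normed module structure of R[i] over itself). *)
HB.instance Definition _ (R : rcfType) := NormedModule.copy R[i] (R[i])^o.

Definition iC {R : rcfType} : R[i] := Complex 0 1.

(* Convention: (x,y) is linear in x and conjugate-linear in y.         *)
(* Complex numbers are ordered by the partial order of R[i]            *)
(* (a <= b iff b - a is real and nonnegative).                         *)

Definition inner_product {R : rcfType} {V : lmodType R[i]} (ip : V -> V -> R[i]) : Prop :=
  [/\ forall x y z, ip (x + y) z = ip x z + ip y z,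
      forall (a : R[i]) x y, ip (a *: x) y = a * ip x y,
      forall x y, ip y x = conjc (ip x y),
      forall x, 0 <= ip x x
    & forall x, ip x x = 0 -> x = 0].

Definition ip_converges {R : rcfType} {V : lmodType R[i]} (ip : V -> V -> R[i])
    (u : nat -> V) (x : V) : Prop :=
  forall e : R, 0 < e -> exists N : nat, forall n, (N <= n)%N ->
    ip (u n - x) (u n - x) < e%:C%C.

Definition ip_cauchy {R : rcfType} {V : lmodType R[i]} (ip : V -> V -> R[i])
    (u : nat -> V) : Prop :=
  forall e : R, 0 < e -> exists N : nat, forall m n, (N <= m)%N -> (N <= n)%N ->
    ip (u m - u n) (u m - u n) < e%:C%C.

Definition hilbert {R : rcfType} {V : lmodType R[i]} (ip : V -> V -> R[i]) : Prop :=
  inner_product ip /\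
  forall u : nat -> V, ip_cauchy ip u -> exists x, ip_converges ip u x.

Definition ip_separable {R : rcfType} {V : lmodType R[i]} (ip : V -> V -> R[i]) : Prop :=
  exists d : nat -> V, forall (x : V) (e : R), 0 < e ->
    exists n, ip (x - d n) (x - d n) < e%:C%C.

Definition infinite_dimensional {R : rcfType} (V : lmodType R[i]) : Prop :=
  forall n : nat, exists v : 'I_n -> V,
    forall c : 'I_n -> R[i], \sum_(i < n) c i *: v i = 0 -> forall i, c i = 0.

Definition bounded_op {R : rcfType} {V W : lmodType R[i]}
    (ipV : V -> V -> R[i]) (ipW : W -> W -> R[i]) (f : V -> W) : Prop :=
  exists M : R, forall x, ipW (f x) (f x) <= (M%:C)%C * ipV x x.

Definition adjoint_of {R : rcfType} {V W : lmodType R[i]}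
    (ipV : V -> V -> R[i]) (ipW : W -> W -> R[i]) (f : V -> W) (g : W -> V) : Prop :=
  forall x y, ipW (f x) y = ipV x (g y).

Definition contractive_op {R : rcfType} {V : lmodType R[i]} (ip : V -> V -> R[i])
    (T : V -> V) : Prop :=
  forall x, ip (T x) (T x) <= ip x x.

Definition lin_subspace {R : rcfType} {V : lmodType R[i]} (M : V -> Prop) : Prop :=
  M 0 /\ forall (a : R[i]) x y, M x -> M y -> M (a *: x + y).

Definition ip_closed_set {R : rcfType} {V : lmodType R[i]} (ip : V -> V -> R[i])
    (M : V -> Prop) : Prop :=
  forall (u : nat -> V) x, (forall n, M (u n)) -> ip_converges ip u x -> M x.

(* T (with adjoint Tstar) is completely non-unitary: there is no nonzero closed
   lin_subspace M reducing T such that T restricted to M is unitary (i.e. T|M and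
   T^*|M = (T|M)^* are both isometric on M). *)
Definition cnu {R : rcfType} {V : lmodType R[i]} (ip : V -> V -> R[i])
    (T Tstar : V -> V) : Prop :=
  forall M : V -> Prop, lin_subspace M -> ip_closed_set ip M ->
    (forall x, M x -> M (T x) /\ M (Tstar x)) ->
    (forall x, M x -> ip (T x) (T x) = ip x x /\ ip (Tstar x) (Tstar x) = ip x x) ->
    forall x, M x -> x = 0.

Definition kbracket {R : rcfType} {V : lmodType R[i]} (ip : V -> V -> R[i])
    (a b : V * V) : R[i] :=
  iC * ip a.1 b.1 - iC * ip a.2 b.2.

Definition sperp {R : rcfType} {V : lmodType R[i]} (ip : V -> V -> R[i])
    (S : V * V -> Prop) : V * V -> Prop :=
  fun a => forall b, S b -> kbracket ip a b = 0.

Definition defect_kernel {R : rcfType} {V : lmodType R[i]} (T Tstar : V -> V) : V -> Prop :=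
  fun x => x - Tstar (T x) = 0.

Definition A_T {R : rcfType} {V : lmodType R[i]} (T Tstar : V -> V) : V * V -> Prop :=
  fun a => exists x, defect_kernel T Tstar x /\ a = (x, T x).

(* Boundary quadruple (H+, H-, G+, G-) for A_T^{perp_s}.  The maps G+- are
   given as total functions on HH; only their restriction to A_T^{perp_s}
   matters. *)
Definition boundary_quadruple {R : rcfType} {H Hp Hm : lmodType R[i]}
    (ipH : H -> H -> R[i]) (T Tstar : H -> H)
    (ipP : Hp -> Hp -> R[i]) (ipM : Hm -> Hm -> R[i])
    (Gp : H * H -> Hp) (Gm : H * H -> Hm) : Prop :=
  let D := sperp ipH (A_T T Tstar) in
  [/\ hilbert ipP /\ hilbert ipM,
      (forall (c : R[i]) a b, D a -> D b ->
         Gp (c *: a + b) = c *: Gp a + Gp b /\ Gm (c *: a + b) = c *: Gm a + Gm b),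
      (exists M : R, forall a, D a ->
         ipP (Gp a) (Gp a) + ipM (Gm a) (Gm a) <= (M%:C)%C * (ipH a.1 a.1 + ipH a.2 a.2))
    &
      ((forall x y, exists a, D a /\ Gp a = x /\ Gm a = y) /\
      (forall a, (D a /\ Gp a = 0 /\ Gm a = 0) <-> A_T T Tstar a) /\
      (forall a b, D a -> D b ->
         kbracket ipH a b = iC * ipP (Gp a) (Gp b) - iC * ipM (Gm a) (Gm b)))].

Definition Nplus {R : rcfType} {H : lmodType R[i]} (ipH : H -> H -> R[i])
    (T Tstar : H -> H) (l : R[i]) : H * H -> Prop :=
  fun a => (exists x, a = (x, l *: x)) /\ sperp ipH (A_T T Tstar) a.

Definition Nminus {R : rcfType} {H : lmodType R[i]} (ipH : H -> H -> R[i])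
    (T Tstar : H -> H) (l : R[i]) : H * H -> Prop :=
  fun a => (exists x, a = (l *: x, x)) /\ sperp ipH (A_T T Tstar) a.

Definition weyl_function {R : rcfType} {H Hp Hm : lmodType R[i]}
    (ipH : H -> H -> R[i]) (T Tstar : H -> H)
    (ipP : Hp -> Hp -> R[i]) (ipM : Hm -> Hm -> R[i])
    (Gp : H * H -> Hp) (Gm : H * H -> Hm)
    (B : R[i] -> Hp -> Hm) (Bstar : R[i] -> Hm -> Hp) : Prop :=
  forall l : R[i], `|l| < 1 ->
    [/\ linear (B l), bounded_op ipP ipM (B l), adjoint_of ipP ipM (B l) (Bstar l)
      & forall a, Nplus ipH T Tstar l a -> Gm a = B l (Gp a)].

Definition gamma_plus {R : rcfType} {H Hp : lmodType R[i]}
    (ipH : H -> H -> R[i]) (T Tstar : H -> H) (Gp : H * H -> Hp)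
    (gp : R[i] -> Hp -> H * H) : Prop :=
  forall l : R[i], `|l| < 1 -> forall x, Nplus ipH T Tstar l (gp l x) /\ Gp (gp l x) = x.

Definition gamma_minus {R : rcfType} {H Hm : lmodType R[i]}
    (ipH : H -> H -> R[i]) (T Tstar : H -> H) (Gm : H * H -> Hm)
    (gm : R[i] -> Hm -> H * H) : Prop :=
  forall l : R[i], `|l| < 1 -> forall x, Nminus ipH T Tstar l (gm l x) /\ Gm (gm l x) = x.

Definition phi_plus {R : rcfType} {H Hp : lmodType R[i]} (gp : R[i] -> Hp -> H * H)
  (l : R[i]) (x : Hp) : H := (gp l x).1.
Definition phi_minus {R : rcfType} {H Hm : lmodType R[i]} (gm : R[i] -> Hm -> H * H)
  (l : R[i]) (x : Hm) : H := (gm l x).2.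

From HB Require Import structures.
From mathcomp Require Import all_boot all_order all_algebra.
From mathcomp Require Import complex.
From mathcomp Require Import all_classical all_reals topology normedtype.
From mathcomp Require Import ring.
Import Order.TTheory GRing.Theory Num.Theory.
Import numFieldNormedType.Exports.
Local Open Scope ring_scope.
Local Open Scope classical_set_scope.

(* Parts (1)-(3) are the abstract Green identity
     [a, b] = i (Γ+ a, Γ+ b) - i (Γ- a, Γ- b)
   evaluated at a = γ±(λ) x and b = γ±(μ) y.  As a and b lie in the defect
   subspaces N_λ and N_μ, the Krein side is a scalar multiple of
   (φ±(λ) x, φ±(μ) y), while the boundary side is expressed through the Weyl
   function, since Γ- γ+(λ) = B(λ) and Γ+ γ-(λ) = B(λ̄)^*.
   For the limit in (3): when n ≠ λ the difference quotient equals
   (φ+(n) x, φ-(μ) y), so it suffices that φ+(n) x → φ+(λ) x as n → λ.  By (1),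
   ‖φ+(n) x - φ+(λ) x‖² is bounded by 2‖x‖² times increments of the Szegő
   kernel (1 - a b̄)^-1, which tend to zero. *)

Section InnerProduct.
Context {R : rcfType} {V : lmodType R[i]} {ip : V -> V -> R[i]}.
Hypothesis hip : inner_product ip.

Lemma ipDl x y z : ip (x + y) z = ip x z + ip y z.
Proof. by case: hip. Qed.

Lemma ipZl a x y : ip (a *: x) y = a * ip x y.
Proof. by case: hip. Qed.

Lemma ipC x y : ip y x = (ip x y)^*.
Proof. by case: hip. Qed.

Lemma ip_ge0 x : 0 <= ip x x.
Proof. by case: hip. Qed.

Lemma ip_eq0 x : ip x x = 0 -> x = 0.
Proof. by case: hip => _ _ _ _; apply. Qed.

Lemma ipNl x y : ip (- x) y = - ip x y.
Proof. by rewrite -scaleN1r ipZl mulN1r. Qed.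

Lemma ipBl x y z : ip (x - y) z = ip x z - ip y z.
Proof. by rewrite ipDl ipNl. Qed.

Lemma ipZr a x y : ip x (a *: y) = a^* * ip x y.
Proof. by rewrite !(ipC _ x) ipZl rmorphM. Qed.

Lemma ipBr x y z : ip x (y - z) = ip x y - ip x z.
Proof. by rewrite !(ipC _ x) ipBl rmorphB. Qed.

Lemma ip0r x : ip x 0 = 0.
Proof. by rewrite -(scale0r 0) ipZr conjC0 mul0r. Qed.

Lemma ip_inj x y : (forall z, ip x z = ip y z) -> x = y.
Proof.
move=> exy; apply/eqP; rewrite -subr_eq0; apply/eqP/ip_eq0.
by rewrite ipBl exy subrr.
Qed.

Lemma cauchy_schwarz x y : ip x y * (ip x y)^* <= ip x x * ip y y.
Proof.
have [/ip_eq0 ->|yn0] := eqVneq (ip y y) 0; first by rewrite !ip0r mul0r mulr0.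
have ypos : 0 < ip y y by rewrite lt_def yn0 ip_ge0.
pose t := ip x y / ip y y.
have tc : t^* = (ip x y)^* / ip y y
  by rewrite /t rmorphM fmorphV; congr (_ * _^-1); exact: geC0_conj (ip_ge0 y).
have := ip_ge0 (x - t *: y).
rewrite !ipBl !ipBr !ipZl !ipZr (ipC x y) tc /t.
set a := ip x y; set b := ip y y; set c := ip x x.
have -> : c - a^* / b * a - (a / b * a^* - a / b * (a^* / b * b))
          = (c * b - a * a^*) / b by field.
by rewrite pmulr_lge0 ?invr_gt0 // subr_ge0.
Qed.

End InnerProduct.

Section Limits.
Context {K : numFieldType} {T : Type} {F : set_system T} {FF : Filter F}.

Lemma cvg_inv_1B (f : T -> K) (a : K) : 1 - a != 0 ->
  f t @[t --> F] --> a -> (1 - f t)^-1 @[t --> F] --> (1 - a)^-1.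
Proof. by move=> a1 fa; apply: cvgV => //; apply: cvgB fa; exact: cvg_cst. Qed.

Lemma cvg_sqr_dominated (f g : T -> K) (L : K) :
  g t @[t --> F] --> 0 -> (\forall t \near F, `|f t - L| ^+ 2 <= g t) ->
  f t @[t --> F] --> L.
Proof.
move=> g0 fg; apply/cvgrPdist_lt => e e0.
have e20 : 0 < e ^+ 2 by rewrite exprn_gt0.
near=> t.
have fgt : `|f t - L| ^+ 2 <= g t by near: t.
have gt : `|g t| < e ^+ 2 by near: t; exact: cvgr0_norm_lt.
have gt_ge0 : 0 <= g t by apply: le_trans fgt; rewrite exprn_ge0.
rewrite (ger0_norm gt_ge0) in gt.
rewrite distrC -(@ltr_pXn2r _ 2 isT) ?nnegrE ?normr_ge0 ?(ltW e0).
exact: le_lt_trans fgt gt.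
Unshelve. all: by end_near.
Qed.

End Limits.

Lemma near_unit_disc {K : numFieldType} (l : K) : `|l| < 1 -> \forall n \near l, `|n| < 1.
Proof.
move=> l1; apply/nbhs_normP; exists (1 - `|l|); first by rewrite /= subr_gt0.
move=> n /= ln; have := ler_normB l (l - n).
by rewrite opprB addrC subrK => /le_lt_trans; apply; rewrite -ltrBrDl.
Qed.

Lemma conjC_cvg {R : rcfType} {T : Type} {F : set_system T} {FF : Filter F}
    (f : T -> R[i]) (a : R[i]) :
  f t @[t --> F] --> a -> (f t)^* @[t --> F] --> a^*.
Proof.
move=> /cvgrPdist_lt fa; apply/cvgrPdist_lt => e e0.
by apply: filterS (fa e e0) => t; rewrite -rmorphB norm_conjC.
Qed.

Local Notation szego a b := (1 - a * b^*)^-1.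

Lemma oneBM_neq0 {K : numDomainType} (a b : K) :
  `|a| < 1 -> `|b| < 1 -> 1 - a * b != 0.
Proof.
move=> a1 b1; rewrite subr_eq0; apply/eqP => ab1.
have : `|a * b| < 1 by rewrite normrM (le_lt_trans _ a1) // ler_piMr // ltW.
by rewrite -ab1 normr1 ltxx.
Qed.

Lemma norm_conjC_lt1 {R : rcfType} {l : R[i]} : `|l| < 1 -> `|l^*| < 1.
Proof. by rewrite norm_conjC. Qed.

Lemma szego_increments_cvg {R : rcfType} {l : R[i]} : `|l| < 1 ->
  `|szego n n - szego l l| + `|szego n l - szego l l| + `|szego l n - szego l l|
    @[n --> l] --> 0.
Proof.
move=> l1; have id_cvg : n @[n --> l] --> l := cvg_id.
have cst_cvg : (fun=> l) @ nbhs l --> l by exact: cvg_cst.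
have dist_cvg (f h : R[i] -> R[i]) : f n @[n --> l] --> l -> h n @[n --> l] --> l ->
    `|szego (f n) (h n) - szego l l| @[n --> l] --> 0.
  move=> fl hl; have ll1 : 1 - l * l^* != 0 by rewrite oneBM_neq0 ?norm_conjC_lt1.
  have hc : (h n)^* @[n --> l] --> l^* by exact: conjC_cvg hl.
  have fh : f n * (h n)^* @[n --> l] --> l * l^* by exact: cvgM fl hc.
  have k_cvg : szego (f n) (h n) @[n --> l] --> szego l l by exact: cvg_inv_1B _ _ ll1 fh.
  have d_cvg : szego (f n) (h n) - szego l l @[n --> l] --> 0.
    by rewrite -(subrr (szego l l)); exact: cvgB k_cvg (cvg_cst _).
  by rewrite -(@normr0 _ R[i]); exact: cvg_norm d_cvg.
have d1 : `|szego n n - szego l l| @[n --> l] --> 0 := dist_cvg _ _ id_cvg id_cvg.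
have d2 : `|szego n l - szego l l| @[n --> l] --> 0 := dist_cvg _ _ id_cvg cst_cvg.
have d3 : `|szego l n - szego l l| @[n --> l] --> 0 := dist_cvg _ _ cst_cvg id_cvg.
have d12 : `|szego n n - szego l l| + `|szego n l - szego l l| @[n --> l] --> 0 + 0.
  exact: cvgD d1 d2.
suff : `|szego n n - szego l l| + `|szego n l - szego l l| + `|szego l n - szego l l|
    @[n --> l] --> 0 + 0 + 0 by rewrite !addr0.
exact: cvgD d12 d3.
Qed.

Lemma iC_neq0 {R : rcfType} : (iC : R[i]) != 0.
Proof. by rewrite /iC eq_complex /= oner_eq0 andbF. Qed.

Section BoundaryQuadruple.
Context {R : rcfType} {H Hp Hm : lmodType R[i]}.
Context {ipH : H -> H -> R[i]} {ipP : Hp -> Hp -> R[i]} {ipM : Hm -> Hm -> R[i]}.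
Context {T Tstar : H -> H} {Gp : H * H -> Hp} {Gm : H * H -> Hm}.
Context {B : R[i] -> Hp -> Hm} {Bstar : R[i] -> Hm -> Hp}.
Context {gp : R[i] -> Hp -> H * H} {gm : R[i] -> Hm -> H * H}.
Hypotheses (hH : inner_product ipH) (hP : inner_product ipP) (hM : inner_product ipM).
Local Notation D := (sperp ipH (A_T T Tstar)).
Hypothesis green : forall a b, D a -> D b ->
  kbracket ipH a b = iC * ipP (Gp a) (Gp b) - iC * ipM (Gm a) (Gm b).
Hypotheses (hB : weyl_function ipH T Tstar ipP ipM Gp Gm B Bstar)
  (hgp : gamma_plus ipH T Tstar Gp gp) (hgm : gamma_minus ipH T Tstar Gm gm).

Lemma green_ip {a b} : D a -> D b ->
  ipH a.1 b.1 - ipH a.2 b.2 = ipP (Gp a) (Gp b) - ipM (Gm a) (Gm b).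
Proof. by move=> Da Db; apply: (mulfI iC_neq0); rewrite !mulrBr -green. Qed.

Lemma Bstar_adj {l : R[i]} :
  `|l| < 1 -> forall w y, ipP (Bstar l w) y = ipM w (B l y).
Proof.
by move=> l1 w y; have [_ _ adj _] := hB l l1; rewrite (ipC hP) -adj -(ipC hM).
Qed.

Lemma gamma_plusP (x : Hp) {l : R[i]} : `|l| < 1 ->
  [/\ gp l x = (phi_plus gp l x, l *: phi_plus gp l x), D (gp l x),
      Gp (gp l x) = x & Gm (gp l x) = B l x].
Proof.
move=> l1; have [[[u eu] Da] Gpa] := hgp l l1 x; have [_ _ _ GmB] := hB l l1.
rewrite /phi_plus eu /= -eu; split=> //.
by rewrite GmB ?Gpa //; split=> //; exists u.
Qed.

Lemma gamma_minusP (x : Hm) {l : R[i]} : `|l| < 1 ->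
  [/\ gm l x = (l *: phi_minus gm l x, phi_minus gm l x), D (gm l x),
      Gm (gm l x) = x & Gp (gm l x) = Bstar l^* x].
Proof.
move=> l1; have [[[u eu] Da] Gma] := hgm l l1 x.
rewrite /phi_minus eu /= -eu; split=> //; apply: (ip_inj hP) => z.
have [ev Dv Gpv Gmv] := gamma_plusP z (norm_conjC_lt1 l1).
(* the Green identity for gm l x and gp l^* z: its Krein side vanishes *)
have := green_ip Da Dv.
rewrite Gma Gpv Gmv eu ev /= -eu -(Bstar_adj (norm_conjC_lt1 l1)).
by rewrite ipZl // ipZr // conjCK subrr => /esym/subr0_eq.
Qed.

Lemma ip_phi_plus (l m : R[i]) (x y : Hp) : `|l| < 1 -> `|m| < 1 ->
  ipH (phi_plus gp l x) (phi_plus gp m y)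
  = (ipP x y - ipM (B l x) (B m y)) / (1 - l * m^*).
Proof.
move=> l1 m1; have [ea Da Gpa Gma] := gamma_plusP x l1.
have [eb Db Gpb Gmb] := gamma_plusP y m1.
have := green_ip Da Db; rewrite Gpa Gpb Gma Gmb ea eb /= ipZl // ipZr // => <-.
by field; rewrite oneBM_neq0 ?norm_conjC.
Qed.

Lemma ip_phi_minus (l m : R[i]) (x y : Hm) : `|l| < 1 -> `|m| < 1 ->
  ipH (phi_minus gm l x) (phi_minus gm m y)
  = ipM (x - B m^* (Bstar l^* x)) y / (1 - l * m^*).
Proof.
move=> l1 m1; have [ea Da Gma Gpa] := gamma_minusP x l1.
have [eb Db Gmb Gpb] := gamma_minusP y m1.
have [_ _ adj _] := hB m^* (norm_conjC_lt1 m1).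
have := green_ip Da Db; rewrite Gpa Gpb Gma Gmb ea eb /= ipZl // ipZr // -adj.
rewrite ipBl // => /(congr1 -%R); rewrite !opprB => <-.
by field; rewrite oneBM_neq0 ?norm_conjC.
Qed.

Lemma ip_phi_plus_minus (l m : R[i]) (x : Hp) (y : Hm) :
  `|l| < 1 -> `|m| < 1 -> l != m^* ->
  ipH (phi_plus gp l x) (phi_minus gm m y)
  = ipM (B l x - B m^* x) y / (l - m^*).
Proof.
move=> l1 m1 lm; have [ea Da Gpa Gma] := gamma_plusP x l1.
have [eb Db Gmb Gpb] := gamma_minusP y m1.
have [_ _ adj _] := hB m^* (norm_conjC_lt1 m1).
have := green_ip Da Db; rewrite Gpa Gpb Gma Gmb ea eb /= ipZl // ipZr // -adj.
rewrite ipBl // => /(congr1 -%R); rewrite !opprB => <-.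
by field; rewrite subr_eq0.
Qed.


Lemma weyl_norm_le (l : R[i]) (x : Hp) :
  `|l| < 1 -> ipM (B l x) (B l x) <= ipP x x.
Proof.
move=> l1; have := ip_ge0 hH (phi_plus gp l x).
rewrite ip_phi_plus // pmulr_lge0 ?subr_ge0 // invr_gt0.
by rewrite -normCK subr_gt0 exprn_ilt1.
Qed.

Lemma weyl_cross_le (n l : R[i]) (x : Hp) : `|n| < 1 -> `|l| < 1 ->
  `|ipM (B n x) (B l x)| <= ipP x x.
Proof.
move=> n1 l1; rewrite -(@ler_pXn2r _ 2 isT) ?nnegrE ?ip_ge0 // normCK.
apply: le_trans (cauchy_schwarz hM _ _) _.
by rewrite expr2 ler_pM ?ip_ge0 ?weyl_norm_le.
Qed.

Lemma phi_plus_dist_decomp (n l : R[i]) (x : Hp) : `|n| < 1 -> `|l| < 1 ->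
  ipH (phi_plus gp n x - phi_plus gp l x) (phi_plus gp n x - phi_plus gp l x)
    + ipM (B n x - B l x) (B n x - B l x) * szego l l
  = (ipP x x - ipM (B n x) (B n x)) * (szego n n - szego l l)
    - (ipP x x - ipM (B n x) (B l x)) * (szego n l - szego l l)
    - (ipP x x - (ipM (B n x) (B l x))^*) * (szego l n - szego l l).
Proof.
move=> n1 l1; rewrite !(ipBl hH) !(ipBr hH) !ip_phi_plus // !(ipBl hM) !(ipBr hM).
by rewrite (ipC hM (B n x) (B l x)); ring.
Qed.

Lemma phi_plus_dist_le (n l : R[i]) (x : Hp) : `|n| < 1 -> `|l| < 1 ->
  ipH (phi_plus gp n x - phi_plus gp l x) (phi_plus gp n x - phi_plus gp l x)
  <= 2 * ipP x x * (`|szego n n - szego l l| + `|szego n l - szego l l|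
                    + `|szego l n - szego l l|).
Proof.
move=> n1 l1; set X := ipP x x.
have X_ge0 : 0 <= X := ip_ge0 hP x.
have dist_le z : `|z| <= X -> `|X - z| <= 2 * X.
  by move=> zX; rewrite (le_trans (ler_normB _ _)) // ger0_norm // mulr_natl mulr2n lerD.
have szego_ll_gt0 : 0 < szego l l by rewrite invr_gt0 -normCK subr_gt0 exprn_ilt1.
have Q_ge0 := mulr_ge0 (ip_ge0 hM (B n x - B l x)) (ltW szego_ll_gt0).
have S_ge0 := addr_ge0 (ip_ge0 hH (phi_plus gp n x - phi_plus gp l x)) Q_ge0.
(* adding the nonnegative ‖B(n)x - B(l)x‖² k(l,l) leaves only kernel increments *)
apply: le_trans (ler_wpDr Q_ge0 (lexx _)) _.
rewrite -(ger0_norm S_ge0) phi_plus_dist_decomp // -/X.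
apply: le_trans (ler_normB _ _) _; apply: le_trans (lerD (ler_normB _ _) (lexx _)) _.
rewrite !normrM !mulrDr; apply: lerD; first apply: lerD.
- by apply: ler_wpM2r; rewrite ?normr_ge0 ?dist_le ?ger0_norm ?ip_ge0 ?weyl_norm_le.
- by apply: ler_wpM2r; rewrite ?normr_ge0 ?dist_le ?weyl_cross_le.
- by apply: ler_wpM2r; rewrite ?normr_ge0 ?dist_le ?norm_conjC ?weyl_cross_le.
Qed.

Lemma ip_phi_plus_minus_cvg (l m : R[i]) (x : Hp) (y : Hm) :
  `|l| < 1 -> `|m| < 1 -> l = m^* ->
  (ipM (B n x - B m^* x) y / (n - m^*)) @[n --> l^']
    --> ipH (phi_plus gp l x) (phi_minus gm m y).
Proof.
move=> l1 m1 lm; set v := phi_minus gm m y.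
have S_cvg := szego_increments_cvg l1.
pose c := ipH v v * (2 * ipP x x).
pose S n := `|szego n n - szego l l| + `|szego n l - szego l l|
             + `|szego l n - szego l l|.
apply: (cvg_sqr_dominated _ (fun n => c * S n)).
  have cS_cvg : c * S n @[n --> l] --> c * 0 by exact: cvgM (cvg_cst c) S_cvg.
  by rewrite mulr0 in cS_cvg; exact: cvg_within_filter cS_cvg.
have : \forall n \near l, n != l ->
    `|ipM (B n x - B m^* x) y / (n - m^*) - ipH (phi_plus gp l x) v| ^+ 2 <= c * S n.
  near=> n => nl; have n1 : `|n| < 1 by near: n; exact: near_unit_disc.
  rewrite -ip_phi_plus_minus -?lm // -(ipBl hH) normCK.
  apply: le_trans (cauchy_schwarz hH _ _) _.
  by rewrite mulrC /c -mulrA ler_wpM2l ?ip_ge0 ?phi_plus_dist_le.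
(* [\forall n \near l^', P n] unfolds to [\forall n \near l, n != l -> P n] *)
by [].
Unshelve. all: by end_near.
Qed.

End BoundaryQuadruple.

Theorem proposition4p12 (R : realType)
  (H Hp Hm : lmodType R[i])
  (ipH : H -> H -> R[i]) (ipP : Hp -> Hp -> R[i]) (ipM : Hm -> Hm -> R[i])
  (T Tstar : H -> H)
  (Gp : H * H -> Hp) (Gm : H * H -> Hm)
  (B : R[i] -> Hp -> Hm) (Bstar : R[i] -> Hm -> Hp)
  (gp : R[i] -> Hp -> H * H) (gm : R[i] -> Hm -> H * H)
  (hH : hilbert ipH) (hsep : ip_separable ipH) (hinf : infinite_dimensional H)
  (hTlin : linear T) (hTadj : adjoint_of ipH ipH T Tstar)
  (hTcontr : contractive_op ipH T) (hTcnu : cnu ipH T Tstar)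
  (hbq : boundary_quadruple ipH T Tstar ipP ipM Gp Gm)
  (hB : weyl_function ipH T Tstar ipP ipM Gp Gm B Bstar)
  (hgp : gamma_plus ipH T Tstar Gp gp)
  (hgm : gamma_minus ipH T Tstar Gm gm) :
  (* (1) lambda, mu in D_+, x, y in H_+ *)
  (forall (l m : R[i]) (x y : Hp), `|l| < 1 -> `|m| < 1 ->
     ipH (phi_plus gp l x) (phi_plus gp m y)
     = ipP (x - Bstar m (B l x)) y / (1 - l * conjc m))
  /\
  (* (2) lambda, mu in D_-, x, y in H_- *)
  (forall (l m : R[i]) (x y : Hm), `|l| < 1 -> `|m| < 1 ->
     ipH (phi_minus gm l x) (phi_minus gm m y)
     = ipM (x - B (conjc m) (Bstar (conjc l) x)) y / (1 - l * conjc m))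
  /\
  (* (3) lambda in D_+, mu in D_-, x in H_+, y in H_- *)
  (forall (l m : R[i]) (x : Hp) (y : Hm), `|l| < 1 -> `|m| < 1 ->
     (l != conjc m ->
        ipH (phi_plus gp l x) (phi_minus gm m y)
        = ipM (B l x - B (conjc m) x) y / (l - conjc m))
     /\
     (l = conjc m ->
        (ipM (B n x - B (conjc m) x) y / (n - conjc m)) @[n --> l^']
          --> ipH (phi_plus gp l x) (phi_minus gm m y))).
Proof.
have hH' : inner_product ipH by case: hH.
case: hbq => -[[hP _] [hM _]] _ _ [_ [_ green]].
have phi_pp := ip_phi_plus hH' green hB hgp.
have phi_mm := ip_phi_minus hH' hP hM green hB hgp hgm.
have phi_pm := ip_phi_plus_minus hH' hP hM green hB hgp hgm.
have phi_pm_cvg := ip_phi_plus_minus_cvg hH' hP hM green hB hgp hgm.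
split; [|split] => l m x y l1 m1.
- by rewrite phi_pp // (ipBl hP) (Bstar_adj hP hM hB).
- exact: phi_mm.
- by split=> lm; [exact: phi_pm | exact: phi_pm_cvg].
Qed.
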